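(* Let $q$ be an indecomposable pattern. Then $\lim_{n\to\infty}\sqrt[n]{\textup{Sav}_n(q)}$ exists (and is finite).
   Context: Permutations are written in one-line notation $p=p_1\cdots p_n$ with $p_i=p(i)$. $p$ contains a pattern $q=q_1\cdots q_k$ if there are indices $i_1<\cdots<i_k$ with $p_{i_r}<p_{i_s}$ iff $q_r<q_s$; otherwise $p$ avoids $q$. $p^2(i)=p(p(i))$. A permutation $p$ is strongly $q$-avoiding if both $p$ and $p^2$ avoid $q$, and $\textup{Sav}_n(q)$ is the number of strongly $q$-avoiding permutations of length $n$. The direct sum of permutations $p$ (length $n$) and $p'$ (length $m$) is the permutation $p\oplus p'$ of length $n+m$ equal to $p_1\cdots p_n(p'_1+n)\cdots(p'_m+n)$. A pattern $q$ is indecomposable if it cannot be written as $q=a\oplus b$ with $a,b$ both nonempty, i.e. there is no cut of $q$ into a nonempty prefix and nonempty suffix with every entry of the prefix smaller than every entry of the suffix. *)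

From HB Require Import structures.
From mathcomp Require Import all_boot all_fingroup.
From Stdlib Require Import Reals.

Set Implicit Arguments.
Unset Strict Implicit.
Unset Printing Implicit Defensive.

(* Permutations of length n are elements of 'S_n acting on {0,...,n-1}
   (0-based version of one-line notation: p_i = p i). *)

Definition contains (n k : nat) (p : 'S_n) (q : 'S_k) : bool :=
  [exists f : {ffun 'I_k -> 'I_n},
     [forall r : 'I_k, forall s : 'I_k,
        ((r < s)%N ==> (f r < f s)%N) &&
        ((p (f r) < p (f s))%N == (q r < q s)%N)]].

Definition avoids (n k : nat) (p : 'S_n) (q : 'S_k) : bool := ~~ contains p q.

Definition strongly_avoids (n k : nat) (p : 'S_n) (q : 'S_k) : bool :=
  avoids p q && avoids (p * p)%g q.

Definition Sav (n k : nat) (q : 'S_k) : nat :=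
  #|[set p : 'S_n | strongly_avoids p q]|.

Definition indecomposable (k : nat) (q : 'S_k) : Prop :=
  ~ (exists m : nat, [/\ (0 < m)%N, (m < k)%N &
        forall i j : 'I_k, (i < m)%N -> (m <= j)%N -> (q i < q j)%N]).

(* n-th root of a nonnegative real (0 for x <= 0, avoiding Stdlib's ln 0 = 0). *)
Definition nthroot (x : R) (n : nat) : R :=
  match Rlt_dec 0 x with
  | left _ => Rpower x (/ INR n)
  | right _ => 0%R
  end.

From Stdlib Require Import Reals Lra Classical.
From HB Require Import structures.
From mathcomp Require Import all_boot all_fingroup zify.

(* If q is indecomposable, the direct sum of two strongly
   q-avoiding permutations is again strongly q-avoiding (an occurrence of q
   cannot straddle the two summands, and squaring commutes with direct
   sums), so n |-> ln Sav_n(q) is superadditive and, by Fekete's lemma,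
   ln Sav_n(q) / n converges to its supremum.  That supremum is finite by
   the Stanley-Wilf bound Sav_n(q) <= Av_n(q) <= K^n: by Marcus-Tardos, a
   q-avoiding 0-1 matrix of side t^j (t = k^2) has O(t^j) ones, since
   contracting t x t blocks preserves avoidance and only few blocks can meet
   k rows or k columns; Klazar's argument turns this into an exponential
   bound on the number of avoiding matrices of side n.  For k <= 1 the
   pattern occurs in every nonempty permutation and the limit is 0. *)

Set Implicit Arguments.
Unset Strict Implicit.
Unset Printing Implicit Defensive.

Lemma ltn_of_ltn_divn t m n : m %/ t < n %/ t -> m < n.
Proof. by apply: contraTT; rewrite -!leqNgt => /leq_div2r. Qed.

Lemma order_transfer (I : Type) (a u w : I -> nat) : injective a ->
  (forall i j, (u i < u j) = (a i < a j)) ->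
  (forall i j, u i < u j -> w i < w j) ->
  forall i j, (w i < w j) = (a i < a j).
Proof.
move=> a_inj hu hw i j.
case: (ltngtP (a i) (a j)) => [aij|aji|/a_inj ->]; last by rewrite ltnn.
- by apply: hw; rewrite hu.
- by apply/negbTE; rewrite -leqNgt ltnW // hw // hu.
Qed.

Lemma val_perm_inj k (a : 'S_k) : injective (fun i => val (a i)).
Proof. by move=> i j /val_inj /perm_inj. Qed.

Lemma nth_sort_ltn (s : seq nat) i j : uniq s -> i < j < size s ->
  nth 0 (sort leq s) i < nth 0 (sort leq s) j.
Proof.
move=> s_uniq /andP [ij js].
have s_sorted : sorted ltn (sort leq s).
  by rewrite ltn_sorted_uniq_leq sort_uniq s_uniq sort_sorted //; exact: leq_total.
by apply: (sorted_ltn_nth ltn_trans 0 s_sorted); rewrite // inE size_sort // (ltn_trans ij).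
Qed.

Lemma mem_nth_sort (s : seq nat) i : i < size s -> nth 0 (sort leq s) i \in s.
Proof. by move=> i_lt; rewrite -(mem_sort leq) mem_nth // size_sort. Qed.

Lemma sum_nat_of_bool (T : finType) (A : {set T}) (P : pred T) :
  \sum_(i in A) P i = #|[set i in A | P i]|.
Proof. by rewrite -sum1dep_card big_mkcondr. Qed.

Lemma card_ord_interval n (A : {set 'I_n}) lo len :
  (forall x, x \in A -> lo <= x < lo + len) -> #|A| <= len.
Proof.
move=> A_sub; rewrite cardE -(size_map val) -(size_iota lo len).
apply: uniq_leq_size; first by rewrite map_inj_uniq ?enum_uniq //; exact: val_inj.
by move=> y /mapP [x]; rewrite mem_enum => /A_sub x_in ->; rewrite mem_iota.
Qed.

Lemma card_le_by_fibers (T T' : finType) (f : T -> T') (A : {set T}) (C : {set T'}) r :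
  (forall x, x \in A -> f x \in C) ->
  (forall y, y \in C -> #|[set x in A | f x == y]| <= r) -> #|A| <= #|C| * r.
Proof.
move=> fAC fibers; rewrite -sum1_card (partition_big f (mem C)) //=.
rewrite -sum_nat_const; apply: leq_sum => y yC; apply: leq_trans (fibers y yC).
by rewrite -sum1_card; apply: eq_leq; apply: eq_bigl => x; rewrite inE.
Qed.

(** * Fekete's lemma *)

Section Fekete.
Local Open Scope R_scope.

Lemma Rdiv_le_l x y c : 0 < c -> x <= y * c -> x / c <= y.
Proof. by move=> c_gt0 xy; apply: (Rmult_le_reg_r c) => //; field_simplify; lra. Qed.

Lemma Rdiv_lt_l x y c : 0 < c -> x < y * c -> x / c < y.
Proof. by move=> c_gt0 xy; apply: (Rmult_lt_reg_r c) => //; field_simplify; lra. Qed.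

Lemma Rdiv_le_r x y c : 0 < c -> x * c <= y -> x <= y / c.
Proof. by move=> c_gt0 xy; apply: (Rmult_le_reg_r c) => //; field_simplify; lra. Qed.

Variables (b : nat -> R) (B : R).
Hypotheses (b_ge0 : forall n, 0 <= b n) (b_super : forall n p, b n + b p <= b (n + p)).
Hypothesis b_le : forall n, b n <= INR n * B.

Lemma superadditive_mul d m r : INR d * b m <= b (d * m + r).
Proof.
suff b_mul : INR d * b m <= b (d * m) by move: (b_super (d * m) r) (b_ge0 r); lra.
elim: d => [|d IH]; first by rewrite Rmult_0_l; exact: b_ge0.
by rewrite S_INR mulSn addnC; move: (b_super (d * m) m); lra.
Qed.

Lemma ratio_le n : (0 < n)%N -> b n / INR n <= B.
Proof. by move=> n_gt0; apply: Rdiv_le_l; [apply: lt_0_INR; lia | move: (b_le n); lra]. Qed.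

Lemma ratio_lower m n : (0 < m)%N -> (0 < n)%N ->
  b m / INR m - INR m * B / INR n <= b n / INR n.
Proof.
move=> m_gt0 n_gt0; have m_pos : 0 < INR m by apply: lt_0_INR; lia.
have n_pos : 0 < INR n by apply: lt_0_INR; lia.
set x := b m / INR m; have bm : b m = x * INR m by rewrite /x; field; lra.
have x_ge0 : 0 <= x by apply: Rdiv_le_r => //; rewrite Rmult_0_l.
have x_le := ratio_le m_gt0; rewrite -/x in x_le.
have n_le : INR n <= INR (n %/ m) * INR m + INR m.
  rewrite -mult_INR -plus_INR; apply: le_INR; apply/leP.
  by rewrite plusE multE addnC -mulSn ltnW ?ltn_ceil.
have low : INR (n %/ m) * b m <= b n by rewrite {2}(divn_eq n m); exact: superadditive_mul.
apply: Rdiv_le_r => //.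
rewrite Rmult_minus_distr_r /Rdiv Rmult_assoc Rinv_l ?Rmult_1_r; last lra.
rewrite bm in low; nra.
Qed.

Theorem fekete : exists s, Un_cv (fun n => b n / INR n) s.
Proof.
pose E y := exists n, (0 < n)%N /\ y = b n / INR n.
have [s [s_ub s_lub]] : {s | is_lub E s}.
  apply: completeness; last by exists (b 1%N / INR 1), 1%N.
  by exists B => _ [n [n_gt0 ->]]; exact: ratio_le.
exists s => eps eps_gt0.
have [m [m_gt0 m_close]] : exists m, (0 < m)%N /\ s - eps / 2 < b m / INR m.
  apply: NNPP => no_m; suff : s <= s - eps / 2 by lra.
  apply: s_lub => _ [n [n_gt0 ->]]; apply: Rnot_lt_le => close.
  by apply: no_m; exists n.
have [N0 N0_large] := INR_archimed (eps / 2) (INR m * B) ltac:(lra).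
exists (N0 + m)%N => n n_ge; rewrite /R_dist.
have n_gt0 : (0 < n)%N by apply/ltP; lia.
have n_ge' : INR N0 <= INR n by apply: le_INR; lia.
have small : INR m * B / INR n < eps / 2.
  by apply: Rdiv_lt_l; [apply: lt_0_INR; lia | nra].
have := ratio_lower m_gt0 n_gt0; have : b n / INR n <= s by apply: s_ub; exists n.
by move=> le_s ge; rewrite Rabs_left1; lra.
Qed.

End Fekete.

(** * Point sets, blocks and patterns *)

Section PointSets.
Variable N : nat.

(* A 0-1 matrix is encoded by the set of its ones; coordinates range over
   'I_N.+1 so that blocks can be built with inord. *)
Definition point := ('I_N.+1 * 'I_N.+1)%type.

Definition in_box m (M : {set point}) :=
  M \subset [set x : point | (x.1 < m) && (x.2 < m)].

Lemma in_boxP m M x : in_box m M -> x \in M -> x.1 < m /\ x.2 < m.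
Proof. by move=> /subsetP M_box /M_box; rewrite inE => /andP. Qed.

Lemma in_box_le m m' M : m <= m' -> in_box m M -> in_box m' M.
Proof.
move=> le_mm' M_box; apply/subsetP => x /(in_boxP M_box) [x1 x2].
by rewrite inE (leq_trans x1 le_mm') (leq_trans x2 le_mm').
Qed.

Lemma in_box1 M : in_box 1 M -> M \subset [set (ord0, ord0)].
Proof.
move=> M_box; apply/subsetP => -[x1 x2] /(in_boxP M_box) /=.
rewrite !ltnS !leqn0 => -[/eqP x1_0 /eqP x2_0].
by rewrite inE xpair_eqE -!val_eqE /= x1_0 x2_0.
Qed.

Definition block t (x : point) : point := (inord (x.1 %/ t), inord (x.2 %/ t)).

Lemma block1 t x : (block t x).1 = x.1 %/ t :> nat.
Proof. by rewrite inordK // (leq_ltn_trans (leq_div _ _) (ltn_ord _)). Qed.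

Lemma block2 t x : (block t x).2 = x.2 %/ t :> nat.
Proof. by rewrite inordK // (leq_ltn_trans (leq_div _ _) (ltn_ord _)). Qed.

Definition block_compatible t (p : point -> 'I_N.+1) :=
  forall x, p (block t x) = p x %/ t :> nat.

Lemma block_compatible_fst t : block_compatible t fst.
Proof. exact: block1. Qed.

Lemma block_compatible_snd t : block_compatible t snd.
Proof. exact: block2. Qed.

Definition contraction t (M : {set point}) := block t @: M.

Definition block_part t (M : {set point}) y := [set x in M | block t x == y].

Lemma in_box_contraction t m M : 0 < t -> in_box (m * t) M -> in_box m (contraction t M).
Proof.
move=> t_gt0 M_box; apply/subsetP => z /imsetP [x /(in_boxP M_box) [x1 x2] ->].
by rewrite inE block1 block2 !ltn_divLR // x1 x2.
Qed.

Lemma card_block_part_coord (p : point -> 'I_N.+1) t M y :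
  0 < t -> block_compatible t p -> #|p @: block_part t M y| <= t.
Proof.
move=> t_gt0 p_block; apply: (@card_ord_interval _ _ (p y * t)) => z /imsetP [x].
rewrite inE => /andP [_ /eqP <-] ->; rewrite p_block.
by rewrite {2 3}(divn_eq (p x) t) leq_addr ltn_add2l ltn_pmod.
Qed.

Lemma card_block_part_le t (M : {set point}) y :
  #|block_part t M y| <= #|fst @: block_part t M y| * #|snd @: block_part t M y|.
Proof.
rewrite -cardsX; apply: subset_leq_card; apply/subsetP => x x_in.
by rewrite inE !imset_f.
Qed.

Lemma card_sum_block_parts t (M : {set point}) :
  #|M| = \sum_(y in contraction t M) #|block_part t M y|.
Proof.
rewrite -sum1_card (partition_big (block t) (mem (contraction t M))) => [|x xM];
  last exact: imset_f.
by apply: eq_bigr => y _; rewrite sum1_card; apply: eq_card => x; rewrite inE.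
Qed.

Lemma card_block_preimage t (B : {set point}) :
  0 < t -> #|[set x : point | block t x \in B]| <= #|B| * (t * t).
Proof.
move=> t_gt0; apply: (@card_le_by_fibers _ _ (block t)) => [x|y _]; first by rewrite inE.
apply: (@leq_trans #|block_part t [set: point] y|).
  by apply/subset_leq_card/subsetP => x; rewrite !inE => /andP [_ ->].
apply: leq_trans (card_block_part_le t [set: point] y) (leq_mul _ _).
- exact: card_block_part_coord _ _ t_gt0 (@block_compatible_fst t).
- exact: card_block_part_coord _ _ t_gt0 (@block_compatible_snd t).
Qed.

(* The coordinates p1, p2 are parameters so that transposing a point set
   amounts to swapping them (pattern_in_swap). *)
Section Patterns.
Variables (k : nat) (p1 p2 : point -> 'I_N.+1) (a b : 'S_k).

Definition pattern_in (M : {set point}) : bool :=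
  [exists g : {ffun 'I_k -> point}, [forall i, g i \in M] &&
     [forall i, forall j, ((p1 (g i) < p1 (g j)) == (a i < a j))
                       && ((p2 (g i) < p2 (g j)) == (b i < b j))]].

Definition order_isomorphic (g : 'I_k -> point) :=
  forall i j, (p1 (g i) < p1 (g j)) = (a i < a j) /\ (p2 (g i) < p2 (g j)) = (b i < b j).

Lemma pattern_inP (M : {set point}) :
  reflect (exists2 g : 'I_k -> point, forall i, g i \in M & order_isomorphic g)
          (pattern_in M).
Proof.
apply: (iffP existsP) => [[g /andP [/forallP gM /forallP g_iso]]|[g gM g_iso]].
  exists g => // i j; have /forallP /(_ j) /andP [/eqP -> /eqP ->] := g_iso i; by [].
exists [ffun i => g i]; apply/andP; split; apply/forallP => i; rewrite ?ffunE //.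
by apply/forallP => j; rewrite !ffunE; have [-> ->] := g_iso i j; rewrite !eqxx.
Qed.

Lemma order_isomorphic_block t (g h : 'I_k -> point) :
  block_compatible t p1 -> block_compatible t p2 ->
  (forall i, block t (h i) = g i) -> order_isomorphic g -> order_isomorphic h.
Proof.
move=> p1_block p2_block hg g_iso i j.
have a_inj := @val_perm_inj _ a; have b_inj := @val_perm_inj _ b.
split; [apply: (@order_transfer _ _ (fun i => p1 (g i)) (fun i => p1 (h i)) a_inj)
       | apply: (@order_transfer _ _ (fun i => p2 (g i)) (fun i => p2 (h i)) b_inj)];
  move=> {}i {}j; try by have [] := g_iso i j.
- by rewrite -!hg !p1_block => /ltn_of_ltn_divn.
- by rewrite -!hg !p2_block => /ltn_of_ltn_divn.
Qed.

Lemma pattern_in_contraction t (M : {set point}) :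
  block_compatible t p1 -> block_compatible t p2 ->
  pattern_in (contraction t M) -> pattern_in M.
Proof.
move=> p1_block p2_block /pattern_inP [g gM g_iso].
have [h hP] : exists h : 'I_k -> point, forall i, h i \in M /\ block t (h i) = g i.
  apply: (@fin_all_exists _ (fun=> point) (fun i x => x \in M /\ block t x = g i)) => i.
  by have /imsetP [x xM ->] := gM i; exists x.
apply/pattern_inP; exists h; first by move=> i; have [] := hP i.
apply: (@order_isomorphic_block t g h p1_block p2_block) g_iso => i.
by have [] := hP i.
Qed.

End Patterns.

Lemma pattern_in_swap k (p1 p2 : point -> 'I_N.+1) (a b : 'S_k) (M : {set point}) :
  pattern_in p2 p1 b a M = pattern_in p1 p2 a b M.
Proof.
apply/pattern_inP/pattern_inP => -[g gM g_iso]; exists g => // i j;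
  by have [-> ->] := g_iso i j.
Qed.

Section WideBlocks.
Variables (k t : nat) (p1 p2 : point -> 'I_N.+1) (a b : 'S_k) (M : {set point}).
Hypotheses (t_gt0 : 0 < t) (p1_block : block_compatible t p1).
Hypothesis p2_block : block_compatible t p2.
Hypothesis p_inj : forall x y, p1 x = p1 y -> p2 x = p2 y -> x = y.
Hypothesis M_avoids : ~~ pattern_in p1 p2 a b M.

Definition residue (z : 'I_N.+1) : 'I_t := Ordinal (ltn_pmod z t_gt0).

Definition residues y := [set residue (p2 x) | x in block_part t M y].

Definition wide y := k <= #|p2 @: block_part t M y|.

Lemma block_part_p2 y x : x \in block_part t M y -> p2 x %/ t = p2 y.
Proof. by rewrite inE => /andP [_ /eqP <-]; rewrite p2_block. Qed.

Lemma card_residues y : #|residues y| = #|p2 @: block_part t M y|.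
Proof.
rewrite /residues (imset_comp residue p2) card_in_imset //.
move=> _ _ /imsetP [x xy ->] /imsetP [x' x'y ->] /(congr1 val) /= eq_mod.
apply: val_inj => /=; rewrite (divn_eq (p2 x) t) (divn_eq (p2 x') t) eq_mod.
by rewrite (block_part_p2 xy) (block_part_p2 x'y).
Qed.

(* Blocks of one block column sharing their set S of column residues pairwise
   differ in their block row, so k of them, together with k residues of S,
   host an occurrence of the pattern. *)
Lemma card_wide_class_lt (F : {set point}) c S :
  (forall y, y \in F -> [/\ p2 y = c, residues y = S & wide y]) -> #|F| < k.
Proof.
move=> F_col; rewrite ltnNge; apply: (contraNN _ M_avoids) => k_le_F.
have k_le_S : k <= #|S|.
  case: (posnP k) => [-> //|k_gt0].
  have /card_gt0P [y0 y0F] := leq_trans k_gt0 k_le_F.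
  by have [_ <- wide_y0] := F_col _ y0F; rewrite card_residues.
pose sS := [seq val z | z <- enum S]; pose sF := [seq val (p1 y) | y <- enum F].
have sS_uniq : uniq sS by rewrite map_inj_uniq ?enum_uniq //; exact: val_inj.
have sF_uniq : uniq sF.
  rewrite map_inj_in_uniq ?enum_uniq // => y y'; rewrite !mem_enum => yF y'F /val_inj.
  by move/p_inj; apply; have [-> _ _] := F_col _ yF; have [-> _ _] := F_col _ y'F.
have sS_size : k <= size sS by rewrite size_map -cardE.
have sF_size : k <= size sF by rewrite size_map -cardE.
pose col i := nth 0 (sort leq sS) i; pose row i := nth 0 (sort leq sF) i.
have [g gP] : exists g : 'I_k -> point, forall i,
    [/\ g i \in M, p1 (g i) %/ t = row (a i) & p2 (g i) = c * t + col (b i) :> nat].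
  apply: (@fin_all_exists _ (fun=> point) (fun i x => [/\ x \in M,
    p1 x %/ t = row (a i) & p2 x = c * t + col (b i) :> nat])) => i.
  have /mapP [y] : row (a i) \in sF by apply/mem_nth_sort/(leq_trans _ sF_size).
  rewrite mem_enum => yF row_y.
  have /mapP [z] : col (b i) \in sS by apply/mem_nth_sort/(leq_trans _ sS_size).
  rewrite mem_enum => zS col_z; have [p2y ry _] := F_col _ yF.
  move: zS; rewrite -ry => /imsetP [x xy z_res]; move: (xy); rewrite inE => /andP [xM _].
  exists x; split; rewrite // ?row_y ?col_z ?z_res /=.
  - by move: xy; rewrite inE => /andP [_ /eqP <-]; rewrite p1_block.
  - by rewrite {1}(divn_eq (p2 x) t) (block_part_p2 xy) p2y.
apply/pattern_inP; exists g => [i|i j]; first by have [] := gP i.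
have a_inj := @val_perm_inj _ a; have b_inj := @val_perm_inj _ b.
split; [apply: (@order_transfer _ _ (fun i => val (a i)) (fun i => p1 (g i)) a_inj)
       | apply: (@order_transfer _ _ (fun i => val (b i)) (fun i => p2 (g i)) b_inj)] => //.
- move=> {}i {}j lt_ij; apply: (@ltn_of_ltn_divn t).
  have [_ -> _] := gP i; have [_ -> _] := gP j.
  by apply: nth_sort_ltn; rewrite // lt_ij (leq_trans _ sF_size).
- move=> {}i {}j lt_ij; have [_ _ ->] := gP i; have [_ _ ->] := gP j.
  by rewrite ltn_add2l; apply: nth_sort_ltn; rewrite // lt_ij (leq_trans _ sS_size).
Qed.

Lemma card_wide_blocks m : (forall x, x \in M -> p2 x < m * t) ->
  #|[set y in contraction t M | wide y]| <= m * 2 ^ t * k.-1.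
Proof.
move=> M_box; pose C := setX [set c : 'I_N.+1 | c < m] (powerset [set: 'I_t]).
apply: (@leq_trans (#|C| * k.-1)).
  apply: (@card_le_by_fibers _ _ (fun y => (p2 y, residues y))).
    move=> y; rewrite !inE => /andP [/imsetP [x xM ->] _].
    by rewrite p2_block ltn_divLR ?M_box ?subsetT.
  move=> [c S] _; set F := [set _ in _ | _].
  suff : #|F| < k by lia.
  apply: (@card_wide_class_lt F c S) => y; rewrite !inE xpair_eqE.
  by case/andP => /andP [_ wide_y] /andP [/eqP -> /eqP ->].
apply: leq_mul => //; rewrite cardsX card_powerset cardsT card_ord leq_mul2r.
by rewrite (@card_ord_interval _ _ 0) ?orbT // => c; rewrite inE.
Qed.

End WideBlocks.

Lemma contraction_avoids k (a b : 'S_k) t (M : {set point}) :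
  ~~ pattern_in fst snd a b M -> ~~ pattern_in fst snd a b (contraction t M).
Proof.
apply: contraNN; apply: pattern_in_contraction.
- exact: block_compatible_fst.
- exact: block_compatible_snd.
Qed.


(** * The Marcus-Tardos theorem and Klazar's bound *)

(* A block meeting fewer than k rows and k columns holds at most (k-1)^2
   points; the other blocks are wide in columns (snd) or in rows (fst). *)
Lemma card_le_blocks k t (M : {set point}) : 0 < t ->
  #|M| <= k.-1 * k.-1 * #|contraction t M|
          + t * t * (#|[set y in contraction t M | wide k t snd M y]|
                     + #|[set y in contraction t M | wide k t fst M y]|).
Proof.
move=> t_gt0; rewrite (card_sum_block_parts t) mulnDr -!sum_nat_of_bool !big_distrr.
rewrite (mulnC (k.-1 * _)) -sum_nat_const -!big_split /=; apply: leq_sum => y _.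
apply: leq_trans (card_block_part_le t M y) _.
have u_le := card_block_part_coord M y t_gt0 (@block_compatible_fst t).
have v_le := card_block_part_coord M y t_gt0 (@block_compatible_snd t).
rewrite /wide; move: #|fst @: _| #|snd @: _| u_le v_le => u v u_le v_le.
have uv_le := leq_mul u_le v_le.
case: (leqP k u) => k_u; case: (leqP k v) => k_v /=;
  last by rewrite !muln0 !addn0; apply: leq_mul; lia.
all: by move: (t * t) (k.-1 * k.-1) uv_le => tt kk; lia.
Qed.

Section MarcusTardos.
Variables (k : nat) (a b : 'S_k).
Hypothesis k_gt0 : 0 < k.

Local Notation avoiding M := (~~ pattern_in fst snd a b M).

Lemma card_heavy_blocks t m M : 0 < t -> in_box (m * t) M -> avoiding M ->
  #|[set y in contraction t M | wide k t snd M y]|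
  + #|[set y in contraction t M | wide k t fst M y]| <= 2 * (m * 2 ^ t * k.-1).
Proof.
move=> t_gt0 M_box M_av; have coord_inj (x y : point) : x.1 = y.1 -> x.2 = y.2 -> x = y.
  by case: x y => [? ?] [? ?] /= -> ->.
rewrite mul2n -addnn leq_add //.
- apply: (card_wide_blocks t_gt0 (@block_compatible_fst t) (@block_compatible_snd t)
                           coord_inj M_av).
  by move=> x /(in_boxP M_box) [].
- apply: (card_wide_blocks (a := b) (b := a) t_gt0 (@block_compatible_snd t)
                           (@block_compatible_fst t)).
  + by move=> x y /[swap]; exact: coord_inj.
  + by rewrite pattern_in_swap.
  by move=> x /(in_boxP M_box) [].
Qed.

Local Notation t := (k * k).
Local Notation c := (t * t * (2 * 2 ^ t * k.-1)).+1.

Fact block_size_gt0 : 0 < t.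
Proof. by rewrite muln_gt0 k_gt0. Qed.

(* The choice t = k^2 gives (k-1)^2 < t, which lets the bound c * m on the
   number of blocks absorb the light blocks. *)
Lemma marcus_tardos_step m M : in_box (m * t) M -> avoiding M ->
  #|contraction t M| <= c * m -> #|M| <= c * (m * t).
Proof.
move=> M_box M_av B_le; have t_gt0 := block_size_gt0.
apply: leq_trans (card_le_blocks k M t_gt0) _.
have light_lt_t : k.-1 * k.-1 < t by case: (k) k_gt0 => // k' _; exact: ltn_mul.
have heavy_le : t * t * (#|[set y in contraction t M | wide k t snd M y]|
                         + #|[set y in contraction t M | wide k t fst M y]|) <= c * m.
  apply: leq_trans (leq_mul (leqnn _) (card_heavy_blocks t_gt0 M_box M_av)) _.
  by move: (t * t) (2 ^ t) k.-1 => A E K; nia.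
apply: leq_trans (leq_add (leq_mul (leqnn _) B_le) heavy_le) _.
by rewrite addnC -mulSn (mulnC m t) [X in _ <= X]mulnCA leq_mul2r light_lt_t orbT.
Qed.

Theorem marcus_tardos j M : in_box (t ^ j) M -> avoiding M -> #|M| <= c * t ^ j.
Proof.
elim: j M => [|j IH] M M_box M_av.
  by rewrite expn0 muln1 (leq_trans (subset_leq_card (in_box1 M_box))) ?cards1.
rewrite expnSr in M_box *; apply: marcus_tardos_step => //.
apply: IH; last exact: contraction_avoids.
exact: in_box_contraction block_size_gt0 M_box.
Qed.

End MarcusTardos.

Section Klazar.
Variables (k : nat) (a b : 'S_k).
Hypothesis k_gt1 : 1 < k.

Local Notation avoiding M := (~~ pattern_in fst snd a b M).
Local Notation t := (k * k).
Local Notation c := (t * t * (2 * 2 ^ t * k.-1)).+1.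
Local Notation C := (c * (t * t)).+1.

Fact block_size_gt1 : 1 < t.
Proof. by rewrite (@leq_trans k) // leq_pmulr // ltnW. Qed.

Definition avoiders m := [set M : {set point} | in_box m M & avoiding M].

Lemma avoidersP m M : M \in avoiders m -> in_box m M /\ avoiding M.
Proof. by rewrite inE => /andP. Qed.

Lemma avoiders_le m m' : m <= m' -> avoiders m \subset avoiders m'.
Proof.
move=> le_mm'; apply/subsetP => M /avoidersP [M_box M_av].
by rewrite inE M_av (in_box_le le_mm').
Qed.

(* An avoider in the box t^j * t is a subset of the t x t blocks of its
   contraction, which is an avoider in the box t^j with at most c * t^j
   points by the Marcus-Tardos bound. *)
Lemma card_avoiders_step j :
  #|avoiders (t ^ j * t)| <= #|avoiders (t ^ j)| * 2 ^ (c * t ^ j * (t * t)).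
Proof.
have t_gt0 := ltnW block_size_gt1.
apply: (@card_le_by_fibers _ _ (contraction t)) => [M /avoidersP [M_box M_av]|B].
  by rewrite inE in_box_contraction ?contraction_avoids.
move=> /avoidersP [B_box B_av]; apply: (@leq_trans #|powerset [set x | block t x \in B]|).
  apply: subset_leq_card; apply/subsetP => M; rewrite !inE => /andP [_ /eqP <-].
  by apply/subsetP => x xM; rewrite inE imset_f.
rewrite card_powerset leq_pexp2l //; apply: leq_trans (card_block_preimage B t_gt0) _.
by rewrite leq_mul2r (marcus_tardos (ltnW k_gt1) B_box B_av) orbT.
Qed.

Lemma card_avoiders_pow j : #|avoiders (t ^ j)| <= 2 ^ (C * t ^ j).
Proof.
elim: j => [|j IH].
  apply: (@leq_trans #|powerset [set (ord0, ord0) : point]|).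
    apply/subset_leq_card/subsetP => M /avoidersP [M_box _].
    by rewrite powersetE in_box1.
  by rewrite card_powerset cards1 expn0 muln1 leq_pexp2l.
rewrite expnSr; apply: leq_trans (card_avoiders_step j) _.
apply: leq_trans (leq_mul IH (leqnn _)) _; rewrite -expnD leq_pexp2l //.
have := block_size_gt1; rewrite (mulnAC c); move: (t ^ j) (c * (t * t)) => T c' t_gt1.
rewrite -mulnDl mulnA mulnAC leq_mul2r; apply/orP; right.
by apply: leq_trans (leq_mul (leqnn _) t_gt1); rewrite muln2 -addnn leq_add2l.
Qed.

Theorem card_avoiders n : #|avoiders n| <= (2 ^ (C * t)) ^ n.
Proof.
case: n => [|n].
  rewrite expn0 -(cards1 (set0 : {set point})); apply/subset_leq_card/subsetP.
  move=> M /avoidersP [M_box _]; rewrite inE; apply/eqP/setP => x.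
  by rewrite inE; apply/negbTE/negP => /(in_boxP M_box) [].
pose j := (trunc_log t n.+1).+1; have t_gt1 := block_size_gt1.
have n_le : n.+1 <= t ^ j by rewrite ltnW ?trunc_log_ltn.
have tj_le : t ^ j <= t * n.+1 by rewrite /j expnS leq_mul2l trunc_logP ?orbT.
apply: leq_trans (subset_leq_card (avoiders_le n_le)) _.
apply: leq_trans (card_avoiders_pow j) _.
by rewrite -expnM leq_pexp2l // -[C * t * _]mulnA leq_mul2l tj_le orbT.
Qed.

End Klazar.
End PointSets.

(** * Permutation patterns and direct sums *)

Definition occurrence n k (p : 'S_n) (q : 'S_k) (f : 'I_k -> 'I_n) :=
  forall r s : 'I_k, (r < s -> f r < f s) /\ (p (f r) < p (f s)) = (q r < q s).

Lemma containsP n k (p : 'S_n) (q : 'S_k) :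
  reflect (exists f, occurrence p q f) (contains p q).
Proof.
apply: (iffP existsP) => [[f /forallP f_occ]|[f f_occ]].
  exists f => r s; have /forallP /(_ s) /andP [/implyP ? /eqP ->] := f_occ r; by [].
exists [ffun r => f r]; apply/forallP => r; apply/forallP => s; rewrite !ffunE.
by have [rs ->] := f_occ r s; rewrite eqxx andbT; apply/implyP.
Qed.

Lemma occurrence_mono n k (p : 'S_n) (q : 'S_k) f (r s : 'I_k) :
  occurrence p q f -> r <= s -> f r <= f s.
Proof.
move=> f_occ; rewrite leq_eqVlt => /orP [/eqP/val_inj -> //|rs].
by have [/(_ rs) /ltnW] := f_occ r s.
Qed.

Section PermutationGraph.
Variables (n k : nat) (q : 'S_k).

Definition graph (p : 'S_n) : {set point n} :=
  [set ((inord i : 'I_n.+1), (inord (p i) : 'I_n.+1)) | i : 'I_n].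

Lemma inord_ord (i : 'I_n) : (inord i : 'I_n.+1) = i :> nat.
Proof. by rewrite inordK // ltnS ltnW. Qed.

Lemma graph_inj : injective graph.
Proof.
move=> p p' eq_pp'; apply/permP => i.
have : ((inord i : 'I_n.+1), (inord (p i) : 'I_n.+1)) \in graph p'.
  by rewrite -eq_pp'; apply: imset_f.
case/imsetP => i' _ [/(congr1 val) + /(congr1 val)].
by rewrite /= !inord_ord => /val_inj <- /val_inj.
Qed.

Lemma in_box_graph p : in_box n (graph p).
Proof. by apply/subsetP => _ /imsetP [i _ ->]; rewrite inE /= !inord_ord !ltn_ord. Qed.

Lemma pattern_in_graph p : pattern_in fst snd 1 q (graph p) -> contains p q.
Proof.
move=> /pattern_inP [g g_graph g_iso].
have [f fP] : exists f : 'I_k -> 'I_n, forall r,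
    g r = ((inord (f r) : 'I_n.+1), (inord (p (f r)) : 'I_n.+1)).
  apply: (@fin_all_exists _ (fun=> 'I_n) (fun r i =>
    g r = ((inord i : 'I_n.+1), (inord (p i) : 'I_n.+1)))) => r.
  by have /imsetP [i _ ->] := g_graph r; exists i.
apply/containsP; exists f => r s.
by have [] := g_iso r s; rewrite !fP /= !inord_ord !perm1 => -> ->.
Qed.

End PermutationGraph.

Lemma Sav_le_card_avoiders n k (q : 'S_k) : Sav n q <= #|avoiders n 1 q n|.
Proof.
rewrite /Sav -(card_imset _ (@graph_inj n)); apply/subset_leq_card/subsetP => G /imsetP [p].
rewrite inE => /andP [p_av _] ->; rewrite inE in_box_graph /=.
by apply: contra p_av; exact: pattern_in_graph.
Qed.

Lemma Sav_le_expn k (q : 'S_k) : 1 < k -> exists K, forall n, Sav n q <= K ^ n.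
Proof.
move=> k_gt1; eexists => n.
exact: leq_trans (Sav_le_card_avoiders n q) (card_avoiders n 1 q k_gt1 n).
Qed.

Section DirectSum.
Variables (n m : nat).

Definition dsum_fun (p : 'S_n) (p' : 'S_m) (i : 'I_(n + m)) : 'I_(n + m) :=
  match split i with inl a => lshift m (p a) | inr b => rshift n (p' b) end.

Lemma dsum_fun_inj p p' : injective (dsum_fun p p').
Proof.
move=> i j; rewrite /dsum_fun -{2}(splitK i) -{2}(splitK j).
case: (split i) => [a|b]; case: (split j) => [a'|b'] /= /(congr1 val) /=.
- by move/val_inj/perm_inj ->.
- by move=> e; have := ltn_ord (p a); rewrite e ltnNge leq_addr.
- by move=> e; have := ltn_ord (p a'); rewrite -e ltnNge leq_addr.
- by move/eqP; rewrite eqn_add2l => /eqP/val_inj/perm_inj ->.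
Qed.

Definition dsum p p' : 'S_(n + m) := perm (@dsum_fun_inj p p').

Lemma dsum_lshift p p' a : dsum p p' (lshift m a) = lshift m (p a).
Proof. by rewrite permE /dsum_fun (unsplitK (inl _ a)). Qed.

Lemma dsum_rshift p p' b : dsum p p' (rshift n b) = rshift n (p' b).
Proof. by rewrite permE /dsum_fun (unsplitK (inr _ b)). Qed.

Lemma dsumM p p' r r' : (dsum p p' * dsum r r')%g = dsum (p * r) (p' * r').
Proof.
apply/permP => i; rewrite permM -(splitK i).
by case: (split i) => [a|b] /=; rewrite ?dsum_lshift ?dsum_rshift permM.
Qed.

Lemma dsum_inj p p' r r' : dsum p p' = dsum r r' -> p = r /\ p' = r'.
Proof.
move=> e; split; apply/permP => i; apply/val_inj.
- by have /(congr1 val) := congr1 (fun s : 'S_(n + m) => s (lshift m i)) e;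
    rewrite !dsum_lshift.
- have /(congr1 val) := congr1 (fun s : 'S_(n + m) => s (rshift n i)) e.
  by rewrite !dsum_rshift /= => /eqP; rewrite eqn_add2l => /eqP.
Qed.

Lemma dsum_ltn p p' (i : 'I_(n + m)) : (dsum p p' i < n) = (i < n).
Proof.
rewrite -(splitK i); case: (split i) => [a|b] /=.
- by rewrite dsum_lshift /= !ltn_ord.
- by rewrite dsum_rshift /= !ltnNge !leq_addr.
Qed.

Section Occurrences.
Variables (k : nat) (q : 'S_k) (p : 'S_n) (p' : 'S_m).

Lemma occurrence_dsum_lshift f g : (forall r, f r = lshift m (g r)) ->
  occurrence (dsum p p') q f -> occurrence p q g.
Proof. by move=> fg f_occ r s; have := f_occ r s; rewrite !fg !dsum_lshift. Qed.

Lemma occurrence_dsum_rshift f g : (forall r, f r = rshift n (g r)) ->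
  occurrence (dsum p p') q f -> occurrence p' q g.
Proof. by move=> fg f_occ r s; have := f_occ r s; rewrite !fg !dsum_rshift /= !ltn_add2l. Qed.

(* Cutting q before the first entry sent to the second summand decomposes q. *)
Lemma occurrence_dsum_straddle f r0 r1 : indecomposable q ->
  occurrence (dsum p p') q f -> f r0 < n -> n <= f r1 -> False.
Proof.
move=> q_ind f_occ f_r0 f_r1.
have [r_min f_min min_r] := @arg_minnP _ r1 (fun r => n <= f r) (fun r => val r) f_r1.
have f_lt (i : 'I_k) : i < r_min -> f i < n.
  by move=> i_lt; rewrite ltnNge; apply: contraTN i_lt => /min_r; rewrite -leqNgt.
apply: q_ind; exists r_min; split; first 2 last.
- move=> i j /f_lt f_i j_ge; have [_ <-] := f_occ i j.
  have f_j : n <= f j := leq_trans f_min (occurrence_mono f_occ j_ge).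
  rewrite -(dsum_ltn p p') in f_i; rewrite leqNgt -(dsum_ltn p p') -leqNgt in f_j.
  exact: leq_trans f_i f_j.
- rewrite lt0n; apply/eqP => r_min0.
  have : f r_min <= f r0 by apply: (occurrence_mono f_occ); rewrite r_min0.
  by rewrite leqNgt (leq_trans f_r0 f_min).
- exact: ltn_ord.
Qed.

Lemma contains_dsum : indecomposable q ->
  contains (dsum p p') q -> contains p q || contains p' q.
Proof.
move=> q_ind /containsP [f f_occ].
case: (boolP [forall r, f r < n]) => [/forallP f_left|].
  apply/orP; left; apply/containsP; exists (fun r => Ordinal (f_left r)).
  by apply: occurrence_dsum_lshift f_occ => r; apply: val_inj.
rewrite negb_forall => /existsP [r1]; rewrite -leqNgt => f_r1.
case: (boolP [forall r, n <= f r]) => [/forallP f_right|].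
  have f_sub r : f r - n < m by rewrite ltn_subLR ?f_right.
  apply/orP; right; apply/containsP; exists (fun r => Ordinal (f_sub r)).
  by apply: occurrence_dsum_rshift f_occ => r; apply: val_inj; rewrite /= subnKC.
rewrite negb_forall => /existsP [r0]; rewrite -ltnNge => f_r0.
by case: (occurrence_dsum_straddle q_ind f_occ f_r0 f_r1).
Qed.

End Occurrences.

Lemma strongly_avoids_dsum k (q : 'S_k) p p' : indecomposable q ->
  strongly_avoids p q -> strongly_avoids p' q -> strongly_avoids (dsum p p') q.
Proof.
move=> q_ind /andP [p_av p2_av] /andP [p'_av p'2_av].
rewrite /strongly_avoids /avoids dsumM.
apply/andP; split; apply/negP => /(contains_dsum q_ind).
- by rewrite (negbTE p_av) (negbTE p'_av).
- by rewrite (negbTE p2_av) (negbTE p'2_av).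
Qed.

Lemma Sav_supermul k (q : 'S_k) : indecomposable q -> Sav n q * Sav m q <= Sav (n + m) q.
Proof.
move=> q_ind; rewrite /Sav -cardsX.
rewrite -(@card_in_imset _ _ (fun pp => dsum pp.1 pp.2)); last first.
  by move=> [r r'] [s s'] _ _ /= /dsum_inj [-> ->].
apply/subset_leq_card/subsetP => s /imsetP [[r r'] /=]; rewrite !inE => /andP [r_av r'_av] ->.
exact: strongly_avoids_dsum.
Qed.

End DirectSum.

Section StrongAvoiders.
Variables (k : nat) (q : 'S_k).

Lemma one_strongly_avoids n : 1 < k -> indecomposable q -> strongly_avoids (1 : 'S_n) q.
Proof.
move=> k_gt1 q_ind; rewrite /strongly_avoids mulg1 andbb /avoids.
apply/containsP => -[f f_occ]; apply: q_ind; exists 1; split => // i j i_lt j_ge.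
by have [lt_f <-] := f_occ i j; rewrite !perm1 lt_f // (leq_trans i_lt j_ge).
Qed.

Lemma Sav_gt0 n : 1 < k -> indecomposable q -> 0 < Sav n q.
Proof.
move=> k_gt1 q_ind; rewrite /Sav card_gt0; apply/set0Pn; exists 1%g.
by rewrite inE one_strongly_avoids.
Qed.

Lemma Sav_eq0 n : k <= 1 -> 0 < n -> Sav n q = 0.
Proof.
move=> k_le1 n_gt0; apply/eqP; rewrite cards_eq0; apply/eqP/setP => p.
rewrite !inE /strongly_avoids /avoids; apply/nandP; left; rewrite negbK.
have ord_eq (r s : 'I_k) : r = s by case: r s => [r ?] [s ?]; apply: val_inj => /=; lia.
apply/containsP; exists (fun=> Ordinal n_gt0) => r s.
by rewrite (ord_eq r s) !ltnn.
Qed.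

End StrongAvoiders.

Section GrowthRate.
Local Open Scope R_scope.

Lemma ln_le x y : 0 < x -> x <= y -> ln x <= ln y.
Proof.
move=> x_gt0 /Rle_lt_or_eq_dec [/(ln_increasing _ _ x_gt0)|->];
  [exact: Rlt_le | exact: Rle_refl].
Qed.

Lemma natpowE a n : Nat.pow a n = (a ^ n)%N.
Proof. by elim: n => //= n ->; rewrite expnS multE. Qed.

Lemma ln_Sav_cv k (q : 'S_k) : (1 < k)%N -> indecomposable q ->
  exists s, Un_cv (fun n => ln (INR (Sav n q)) / INR n) s.
Proof.
move=> k_gt1 q_ind; have [K Sav_le] := Sav_le_expn q k_gt1.
have Sav_ge1 n : 1 <= INR (Sav n q) by apply: (le_INR 1); apply/leP; exact: Sav_gt0.
apply: (@fekete _ (ln (INR K))) => [n|n p|n].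
- by rewrite -ln_1; apply: ln_le; [lra | exact: Sav_ge1].
- have [Sn_pos Sp_pos] : 0 < INR (Sav n q) /\ 0 < INR (Sav p q).
    by move: (Sav_ge1 n) (Sav_ge1 p); lra.
  rewrite -ln_mult //; apply: ln_le; first exact: Rmult_lt_0_compat.
  by rewrite -mult_INR; apply: le_INR; apply/leP; rewrite multE Sav_supermul.
- rewrite -ln_pow; last first.
    by move: (Sav_ge1 1%N) (Sav_le 1%N); rewrite expn1 => ? /leP/le_INR; lra.
  apply: ln_le; first by move: (Sav_ge1 n); lra.
  by rewrite -pow_INR; apply: le_INR; apply/leP; rewrite natpowE.
Qed.

Lemma nthroot_exp_ln x n : 0 < x -> nthroot x n = exp (ln x / INR n).
Proof.
by move=> x_gt0; rewrite /nthroot; case: Rlt_dec => // _; rewrite /Rpower Rmult_comm.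
Qed.

End GrowthRate.

Theorem proposition5p1 (k : nat) (q : 'S_k) :
  indecomposable q ->
  exists L : R, Un_cv (fun n : nat => nthroot (INR (Sav n q)) n) L.
Proof.
move=> q_ind; case: (leqP k 1) => [k_le1|k_gt1].
  exists R0 => eps eps_gt0; exists 1%N => n n_ge1.
  rewrite Sav_eq0 //; last exact/leP.
  rewrite /nthroot; case: Rlt_dec => [/Rlt_irrefl //|_].
  by rewrite /R_dist Rminus_0_r Rabs_R0.
have [s ln_cv] := ln_Sav_cv k_gt1 q_ind; exists (exp s).
have exp_cont := derivable_continuous_pt _ _ (derivable_pt_exp s).
apply: Un_cv_ext (continuity_seq exp _ s exp_cont ln_cv).
move=> n; rewrite nthroot_exp_ln //; apply: lt_0_INR; apply/ltP; exact: Sav_gt0.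
Qed.
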